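(* Let $\rho>0$, $\xi\in\mathbb{R}$, and $H=\frac{1}{2(1+\rho u^2)}\big(u^2(P_u^2+P_y^2)+\xi\big)$ on $(u,y)\in(0,\infty)\times\mathbb{R}$. On the level set $H=E$, $P_y=L>0$ with $2E=\xi$, the projections to the $(u,y)$-plane of the trajectories of the Hamiltonian flow degenerate into the lines $$u=\sqrt{\frac{2\rho E-L^2}{L^2}}\,|y-y_0|,\qquad u\in(0,+\infty),$$ for some $y_0\in\mathbb{R}$. *)

From Stdlib Require Import Reals.
From Coquelicot Require Import Coquelicot.
Open Scope R_scope.

Definition Ham (rho xi : R) (u y pu py : R) : R :=
  (u ^ 2 * (pu ^ 2 + py ^ 2) + xi) / (2 * (1 + rho * u ^ 2)).

Definition is_hamiltonian_trajectory (H : R -> R -> R -> R -> R)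
    (a b : Rbar) (u y pu py : R -> R) : Prop :=
  forall t : R, Rbar_lt a t -> Rbar_lt t b ->
    is_derive u t (Derive (fun q => H (u t) (y t) q (py t)) (pu t)) /\
    is_derive y t (Derive (fun q => H (u t) (y t) (pu t) q) (py t)) /\
    is_derive pu t (- Derive (fun q => H q (y t) (pu t) (py t)) (u t)) /\
    is_derive py t (- Derive (fun q => H (u t) q (pu t) (py t)) (y t)).

(* On the level set the momenta satisfy P_u^2 + P_y^2 = rho xi, and on that
   sphere H no longer depends on u, so P_u is a constant p0.  The velocities
   u' and y' are then u^2/(1 + rho u^2) times p0 and L respectively, so
   L u - p0 y is a first integral and the orbit is the half-line
   u = (p0/L)(y - y0) with p0^2 = 2 rho E - L^2. *)
From Stdlib Require Import Reals Lra Psatz Classical.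
From Coquelicot Require Import Coquelicot.
Open Scope R_scope.

Lemma Derive_Ham_pu rho xi x yv p l : 0 < rho ->
  Derive (fun q => Ham rho xi x yv q l) p = x ^ 2 * p / (1 + rho * x ^ 2).
Proof.
  intro Hrho. apply is_derive_unique. unfold Ham.
  assert (0 < 1 + rho * x ^ 2) by nra.
  auto_derive; [lra | field; lra].
Qed.

Lemma Derive_Ham_py rho xi x yv p l : 0 < rho ->
  Derive (fun q => Ham rho xi x yv p q) l = x ^ 2 * l / (1 + rho * x ^ 2).
Proof.
  intro Hrho. apply is_derive_unique. unfold Ham.
  assert (0 < 1 + rho * x ^ 2) by nra.
  auto_derive; [lra | field; lra].
Qed.

Lemma Derive_Ham_u_momentum_sphere rho xi x yv p l :
  0 < rho -> p ^ 2 + l ^ 2 = rho * xi ->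
  Derive (fun q => Ham rho xi q yv p l) x = 0.
Proof.
  intros Hrho Hsphere. apply is_derive_unique. unfold Ham. rewrite Hsphere.
  auto_derive; [intros; nra | field; nra].
Qed.

Lemma Ham_level_momentum_sphere rho E x yv p l :
  0 < rho -> 0 < x -> Ham rho (2 * E) x yv p l = E ->
  p ^ 2 + l ^ 2 = rho * (2 * E).
Proof.
  intros Hrho Hx Hlevel. unfold Ham in Hlevel.
  assert (Hden : 0 < 1 + rho * x ^ 2) by nra.
  apply (Rmult_eq_compat_r (2 * (1 + rho * x ^ 2))) in Hlevel.
  field_simplify in Hlevel; [|lra].
  assert (Hfactor : x ^ 2 * (p ^ 2 + l ^ 2 - rho * (2 * E)) = 0) by lra.
  apply Rmult_integral in Hfactor as [Hx0 | Hsphere]; [nra | lra].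
Qed.

Lemma is_derive_0_constant_on (a b : Rbar) (g : R -> R) :
  (forall t : R, Rbar_lt a t -> Rbar_lt t b -> is_derive g t 0) ->
  forall t1 t2 : R, Rbar_lt a t1 -> Rbar_lt t1 b -> Rbar_lt a t2 -> Rbar_lt t2 b ->
  g t1 = g t2.
Proof.
  intros Hd t1 t2 Ha1 Hb1 Ha2 Hb2.
  assert (Hin : forall x, Rmin t1 t2 <= x <= Rmax t1 t2 -> Rbar_lt a x /\ Rbar_lt x b).
  { intros x [Hlo Hhi]. split.
    - apply Rbar_lt_le_trans with (Finite (Rmin t1 t2)); [|exact Hlo].
      unfold Rmin; destruct Rle_dec; assumption.
    - apply Rbar_le_lt_trans with (Finite (Rmax t1 t2)); [exact Hhi|].
      unfold Rmax; destruct Rle_dec; assumption. }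
  destruct (MVT_gen g t1 t2 (fun _ => 0)) as [c [_ Hc]].
  - intros x Hx. apply Hd; apply Hin; lra.
  - intros x Hx. apply continuity_pt_filterlim.
    apply (ex_derive_continuous (K := R_AbsRing) (V := R_NormedModule)).
    eexists. apply Hd; apply Hin; lra.
  - lra.
Qed.

Lemma pos_mul_eq_sqrt_sqr_mul_abs (k x : R) : 0 < k * x -> k * x = sqrt (k ^ 2) * Rabs x.
Proof.
  intro Hpos.
  rewrite <- Rsqr_pow2, sqrt_Rsqr_abs, <- Rabs_mult.
  symmetry; apply Rabs_pos_eq; lra.
Qed.

Section LevelSetTrajectory.

Context {rho E L : R} {a b : Rbar} {u y pu py : R -> R}.
Hypothesis Hrho : 0 < rho.
Hypothesis Htraj : is_hamiltonian_trajectory (Ham rho (2 * E)) a b u y pu py.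
Hypothesis Hlevel : forall t : R, Rbar_lt a t -> Rbar_lt t b ->
  0 < u t /\ Ham rho (2 * E) (u t) (y t) (pu t) (py t) = E /\ py t = L.

Lemma trajectory_momentum_sphere (t : R) : Rbar_lt a t -> Rbar_lt t b ->
  pu t ^ 2 + L ^ 2 = rho * (2 * E).
Proof.
  intros Ha Hb. destruct (Hlevel t Ha Hb) as [Hu [HH HL]].
  rewrite <- HL. exact (Ham_level_momentum_sphere rho E _ _ _ _ Hrho Hu HH).
Qed.

Lemma trajectory_is_derive_pu (t : R) : Rbar_lt a t -> Rbar_lt t b -> is_derive pu t 0.
Proof.
  intros Ha Hb. destruct (Htraj t Ha Hb) as [_ [_ [Hpu _]]].
  destruct (Hlevel t Ha Hb) as [_ [_ HL]].
  rewrite Derive_Ham_u_momentum_sphere, Ropp_0 in Hpu; [exact Hpu | exact Hrho |].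
  rewrite HL. exact (trajectory_momentum_sphere t Ha Hb).
Qed.

Lemma trajectory_first_integral (t : R) : Rbar_lt a t -> Rbar_lt t b ->
  is_derive (fun s => L * u s - pu s * y s) t 0.
Proof.
  intros Ha Hb. destruct (Htraj t Ha Hb) as [Hu' [Hy' _]].
  destruct (Hlevel t Ha Hb) as [Hu [_ HL]].
  rewrite Derive_Ham_pu in Hu' by exact Hrho.
  rewrite Derive_Ham_py, HL in Hy' by exact Hrho.
  assert (Hden : 0 < 1 + rho * u t ^ 2) by nra.
  evar (d : R). replace 0 with d.
  - apply @is_derive_minus.
    + apply @is_derive_scal. exact Hu'.
    + apply @is_derive_mult; [exact (trajectory_is_derive_pu t Ha Hb) | exact Hy' |].
      intros; apply Rmult_comm.
  - unfold d, scal, mult, minus, plus, opp; simpl. unfold mult; simpl. field. lra.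
Qed.

End LevelSetTrajectory.

Theorem proposition17 (rho xi E L : R) (a b : Rbar) (u y pu py : R -> R) :
  0 < rho -> 0 < L -> 2 * E = xi -> L ^ 2 < 2 * rho * E ->
  Rbar_lt a b ->
  is_hamiltonian_trajectory (Ham rho xi) a b u y pu py ->
  (forall t : R, Rbar_lt a t -> Rbar_lt t b ->
     0 < u t /\ Ham rho xi (u t) (y t) (pu t) (py t) = E /\ py t = L) ->
  exists y0 : R, forall t : R, Rbar_lt a t -> Rbar_lt t b ->
    u t = sqrt ((2 * rho * E - L ^ 2) / L ^ 2) * Rabs (y t - y0).
Proof.
  intros Hrho HL <- HLE _ Htraj Hlevel.
  destruct (classic (exists t0 : R, Rbar_lt a t0 /\ Rbar_lt t0 b))
    as [[t0 [Ha0 Hb0]] | Hempty].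
  2: { exists 0. intros t Ha Hb. exfalso. apply Hempty. exists t; auto. }
  set (p0 := pu t0).
  set (C := L * u t0 - p0 * y t0).
  assert (Hp0 : p0 ^ 2 = 2 * rho * E - L ^ 2).
  { pose proof (trajectory_momentum_sphere Hrho Hlevel t0 Ha0 Hb0) as Hsphere.
    fold p0 in Hsphere. lra. }
  assert (Hp0_neq : p0 <> 0) by (intro Hz; rewrite Hz in Hp0; nra).
  exists (- C / p0). intros t Ha Hb.
  assert (Hpu : pu t = p0)
    by exact (is_derive_0_constant_on a b pu (trajectory_is_derive_pu Hrho Htraj Hlevel)
                t t0 Ha Hb Ha0 Hb0).
  assert (HC : L * u t - p0 * y t = C).
  { rewrite <- Hpu. unfold C, p0.
    exact (is_derive_0_constant_on a b _ (trajectory_first_integral Hrho Htraj Hlevel)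
             t t0 Ha Hb Ha0 Hb0). }
  assert (Hline : u t = p0 / L * (y t - - C / p0)) by (rewrite <- HC; field; lra).
  replace ((2 * rho * E - L ^ 2) / L ^ 2) with ((p0 / L) ^ 2) by (rewrite <- Hp0; field; lra).
  rewrite <- (pos_mul_eq_sqrt_sqr_mul_abs (p0 / L)), <- Hline; [reflexivity |].
  rewrite <- Hline. exact (proj1 (Hlevel t Ha Hb)).
Qed.
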